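(* Let $p$ be a prime, $0\le i\le p-1$, $r\ge0$ an integer, and $k$ a positive integer not divisible by $p$. Then $|Q_{i,r}^{(k)}|_m\le p^{(r+1)/2}=\sqrt{p(d_r+1)}$, where $d_r=p^r-1$.
   Context: Fix a prime $p$ and a primitive $p$-th root of unity $\xi$. Let $D$ be the $p\times p$ matrix $D_{j,l}=\xi^{jl}$, $j,l\in\{0,\dots,p-1\}$. Define polynomials $Q_{0,r},\dots,Q_{p-1,r}\in\mathbb{C}[x]$ recursively: $Q_{j,0}:=1$ for all $j$, and for $r\ge0$, $$(Q_{0,r+1},Q_{1,r+1},\dots,Q_{p-1,r+1})^T:=D\cdot\big(Q_{0,r},\,x^{p^r}Q_{1,r},\,x^{2p^r}Q_{2,r},\dots,x^{(p-1)p^r}Q_{p-1,r}\big)^T.$$ Each $Q_{j,r}$ has degree $d_r=p^r-1$ and all coefficients of absolute value 1. For a complex polynomial $g(x)=\sum_ia_ix^i$, $|g|_m:=\max_{|x|=1}|g(x)|$ and $g^{(k)}(x):=\sum_ia_i^kx^i$ (Hadamard power). *)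

From HB Require Import structures.
From mathcomp Require Import all_boot all_order all_algebra.
Set Implicit Arguments. Unset Strict Implicit. Unset Printing Implicit Defensive.
Import Order.TTheory GRing.Theory Num.Theory.
Local Open Scope ring_scope.

(* Q p xi r j  =  Q_{j,r} for the prime p and the primitive p-th root xi.
   Q_{j,0} = 1, and
   Q_{j,r+1} = sum_{l<p} D_{j,l} * x^{l p^r} Q_{l,r}  with D_{j,l} = xi^{j l}
   (this is the j-th entry of D * (Q_{0,r}, x^{p^r} Q_{1,r}, ...)^T). *)
Fixpoint Q (C : numClosedFieldType) (p : nat) (xi : C) (r : nat) : nat -> {poly C} :=
  match r with
  | 0 => fun _ => 1
  | r'.+1 => fun j =>
      \sum_(l < p) (xi ^+ (j * l)) *: ('X^(l * p ^ r') * Q p xi r' l)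
  end.

Definition hadamard_pow (C : numClosedFieldType) (k : nat) (g : {poly C}) : {poly C} :=
  map_poly (fun a : C => a ^+ k) g.

From HB Require Import structures.
From mathcomp Require Import all_boot all_order all_algebra.
From mathcomp Require Import zify.
Import Order.TTheory GRing.Theory Num.Theory.
Local Open Scope ring_scope.

(* Q_{j,r} has degree < p^r, so in
      Q_{j,r+1} = sum_l xi^{jl} x^{l p^r} Q_{l,r} the summands occupy disjoint
      blocks of p^r coefficients: the n-th coefficient of Q_{j,r+1} is
      xi^{j q} times the (n mod p^r)-th coefficient of Q_{q,r}, q = n div p^r.
      By induction every coefficient of Q_{j,r} is a power of xi, hence the
      Hadamard power Q_{j,r}^{(k)} is Q_{j,r} built from xi^k instead of xi;
      xi^k is again a primitive p-th root of unity when p does not divide k.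
   2. Energy.  D / sqrt p is unitary (discrete Parseval identity), so on the
      unit circle sum_j |Q_{j,r+1}(x)|^2 = p * sum_l |Q_{l,r}(x)|^2, and by
      induction sum_j |Q_{j,r}(x)|^2 = p^{r+1}.
   3. A single term of that sum is at most p^{r+1}; take square roots. *)

Lemma coef_XnM_block (R : nzSemiRingType) (b l n : nat) (q : {poly R}) :
  (0 < b)%N -> (size q <= b)%N ->
  ('X^(l * b) * q)`_n = if l == (n %/ b)%N then q`_(n %% b)%N else 0.
Proof.
move=> b_gt0 /leq_sizeP q_small; rewrite coefXnM.
have n_split := divn_eq n b; have r_lt : (n %% b < b)%N by rewrite ltn_mod.
case: eqP => [->|l_ne].
  by rewrite ltnNge leq_divM /=; congr (q`_ _); lia.
case: ltnP => [//|lb_le_n]; apply: q_small.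
have : (l <= n %/ b)%N by rewrite leq_divRL.
nia.
Qed.

Section QCoefficients.
Variables (C : numClosedFieldType) (p : nat).
Hypothesis p_gt0 : (0 < p)%N.

(* The recursion only ever multiplies by x^{l p^r}, l < p: deg Q_{j,r} < p^r. *)
Lemma size_Q (xi : C) (r j : nat) : (size (Q p xi r j) <= p ^ r)%N.
Proof.
elim: r j => [|r IH] j; first by rewrite size_poly1.
apply: leq_trans (size_sum _ _ _) _; apply/bigmax_leqP => l _.
apply: leq_trans (size_scale_leq _ _) _.
apply: leq_trans (size_polyMleq _ _) _.
rewrite size_polyXn expnS.
have : (l.+1 * p ^ r <= p * p ^ r)%N by rewrite leq_mul2r ltn_ord orbT.
have size_l := IH l; set s := size (Q p xi r l) in size_l *; lia.
Qed.

Lemma coef_Q_succ (xi : C) (r j n : nat) :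
  (Q p xi r.+1 j)`_n = if (n %/ p ^ r < p)%N
     then xi ^+ (j * (n %/ p ^ r)) * (Q p xi r (n %/ p ^ r))`_(n %% p ^ r)
     else 0.
Proof.
have pr_gt0 : (0 < p ^ r)%N by rewrite expn_gt0 p_gt0.
rewrite /= coef_sum.
under eq_bigr do rewrite coefZ coef_XnM_block ?size_Q // (fun_if (GRing.mul _)) mulr0.
rewrite -big_mkcond /=; case: ltnP => [q_lt_p|q_ge_p].
  by rewrite (big_pred1 (Ordinal q_lt_p)) // => l; rewrite -val_eqE.
rewrite big_pred0 // => l; apply/negbTE/eqP => l_eq.
by move: (ltn_ord l); rewrite l_eq ltnNge q_ge_p.
Qed.

Lemma hadamard_pow_Q (xi : C) (k r j : nat) : (0 < k)%N ->
  hadamard_pow k (Q p xi r j) = Q p (xi ^+ k) r j.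
Proof.
move=> k_gt0; have zero_pow : (0 : C) ^+ k = 0 by rewrite expr0n gtn_eqF.
apply/polyP => n; rewrite coef_map_id0 //.
elim: r j n => [|r IH] j n.
  by rewrite /= !coef1; case: eqP; rewrite ?expr1n.
rewrite !coef_Q_succ; case: ifP => // _.
by rewrite exprMn IH -!exprM mulnC.
Qed.

End QCoefficients.

Lemma geometric_sum_root (R : idomainType) (z : R) (n : nat) :
  z ^+ n = 1 -> z != 1 -> \sum_(j < n) z ^+ j = 0.
Proof.
move=> z_unity z_ne1; apply/eqP.
have /esym/eqP := subrX1 z n; rewrite z_unity subrr mulf_eq0 subr_eq0.
by rewrite (negbTE z_ne1).
Qed.

Lemma mul_conj_unity_root (C : numClosedFieldType) (n : nat) (z : C) :
  (0 < n)%N -> z ^+ n = 1 -> z * z^* = 1.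
Proof.
move=> n_gt0 z_unity; rewrite -normCK.
have /eqP -> : `|z| == 1 by rewrite -(pexpr_eq1 n_gt0) // -normrX z_unity normr1.
exact: expr1n.
Qed.

Section DiscreteFourier.
Variables (C : numClosedFieldType) (p : nat) (w : C).
Hypotheses (p_gt0 : (0 < p)%N) (w_prim : p.-primitive_root w).

Let w_conj : w * w^* = 1.
Proof. exact: mul_conj_unity_root p_gt0 (prim_expr_order w_prim). Qed.

(* Orthogonality of the rows of D = (w^{jl}): the sum over j of
   (w^l conj(w)^m)^j is p if l = m and 0 otherwise. *)
Lemma sum_pow_root_conj (l m : 'I_p) :
  \sum_(j < p) (w ^+ l * w^* ^+ m) ^+ j = if l == m then p%:R else 0.
Proof.
case: eqP => [<-|l_ne_m].
  rewrite -exprMn w_conj expr1n.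
  by under eq_bigr do rewrite expr1n; rewrite sumr_const card_ord.
apply: geometric_sum_root.
  rewrite exprMn -!exprM mulnC [(m * p)%N]mulnC !exprM -rmorphXn.
  by rewrite (prim_expr_order w_prim) rmorph1 !expr1n mulr1.
apply: contra_notN l_ne_m => /eqP z_eq1.
have w_l_eq_m : w ^+ l = w ^+ m.
  by rewrite -[LHS]mulr1 -(expr1n _ m) -w_conj exprMn mulrCA z_eq1 mulr1.
apply: val_inj; move/eqP: w_l_eq_m.
by rewrite (eq_prim_root_expr w_prim) !modn_small // => /eqP.
Qed.

Lemma parseval_dft (a : nat -> C) :
  \sum_(j < p) `|\sum_(l < p) w ^+ (j * l) * a l| ^+ 2 =
  p%:R * \sum_(l < p) `|a l| ^+ 2.
Proof.
have expand (j : 'I_p) : `|\sum_(l < p) w ^+ (j * l) * a l| ^+ 2 =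
    \sum_(l < p) \sum_(m < p) (w ^+ l * w^* ^+ m) ^+ j * (a l * (a m)^*).
  rewrite normCK rmorph_sum mulr_suml; apply: eq_bigr => l _.
  rewrite mulr_sumr; apply: eq_bigr => m _.
  by rewrite rmorphM rmorphXn mulrACA exprMn -!exprM mulnC [(m * j)%N]mulnC.
rewrite (eq_bigr _ (fun j _ => expand j)) exchange_big mulr_sumr.
apply: eq_bigr => l _; rewrite exchange_big (bigD1 l) //=.
rewrite -mulr_suml sum_pow_root_conj eqxx normCK big1 ?addr0 // => m m_ne_l.
by rewrite -mulr_suml sum_pow_root_conj eq_sym (negbTE m_ne_l) mul0r.
Qed.

Lemma sum_sq_Q (x : C) (r : nat) : `|x| = 1 ->
  \sum_(j < p) `|(Q p w r j).[x]| ^+ 2 = p%:R ^+ r.+1.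
Proof.
move=> x_unit; elim: r => [|r IH].
  under eq_bigr do rewrite hornerC normr1 expr1n.
  by rewrite sumr_const card_ord.
have horner_Q_succ (j : 'I_p) : (Q p w r.+1 j).[x] =
    \sum_(l < p) w ^+ (j * l) * (x ^+ (l * p ^ r) * (Q p w r l).[x]).
  rewrite /= horner_sum; apply: eq_bigr => l _.
  by rewrite hornerZ hornerM hornerXn.
under eq_bigr do rewrite horner_Q_succ.
rewrite (parseval_dft (fun l => x ^+ (l * p ^ r) * (Q p w r l).[x])).
under eq_bigr do rewrite normrM normrX x_unit expr1n mul1r.
by rewrite IH -exprS.
Qed.

End DiscreteFourier.

(* Proposition 4.3: step 1 turns the Hadamard power into Q_{i,r} for the
   primitive root xi^k, and step 2 bounds one term of the energy identity. *)
Theorem proposition4p3 (C : numClosedFieldType) (p : nat) (xi : C)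
  (i r k : nat) :
  prime p -> p.-primitive_root xi -> (i <= p - 1)%N ->
  (0 < k)%N -> ~~ (p %| k)%N ->
  forall x : C, `|x| = 1 ->
    `|(hadamard_pow k (Q p xi r i)).[x]| <= sqrtC (p%:R) ^+ r.+1.
Proof.
move=> p_prime xi_prim i_le k_gt0 p_ndvd_k x x_unit.
have p_gt0 := prime_gt0 p_prime.
have i_lt_p : (i < p)%N by lia.
have xik_prim : p.-primitive_root (xi ^+ k).
  by rewrite prim_root_exp_coprime // coprime_sym prime_coprime.
rewrite hadamard_pow_Q // -(ler_pXn2r (n := 2)) ?qualifE /= ?normr_ge0 //; last first.
  by rewrite exprn_ge0 ?sqrtC_ge0 ?ler0n.
rewrite -exprM mulnC exprM sqrtCK -(@sum_sq_Q C p (xi ^+ k) p_gt0 xik_prim x r x_unit).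
rewrite (bigD1 (Ordinal i_lt_p)) //= lerDl.
by apply: sumr_ge0 => j _; apply: exprn_ge0.
Qed.
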